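(* Let $\Omega$ be a bounded strictly convex planar domain with $\mathcal{C}^1$ boundary, axially symmetric with respect to a line, and let $O$ be one of the two points of $\partial\Omega$ on the symmetry axis. Let $q\ge2$ and let $\mathcal{P}^{(q)}$ be the set of convex $q$-gons $(p_0,\dots,p_{q-1})$ with vertices on $\partial\Omega$ in positive cyclic order, symmetric with respect to the axis, and with $p_0=O$. If $\underline{p}^{(\Omega,q)}\in\mathcal{P}^{(q)}$ maximizes the area among all polygons in $\mathcal{P}^{(q)}$, then its vertices form a $q$-periodic orbit of the symplectic billiard in $\Omega$.
   Context: Symplectic billiard in $\Omega$: a chord $(q_1,q_2)$ of $\partial\Omega$ is sent to $(q_2,q_3)$ where $q_3\in\partial\Omega$ is such that the line $q_1q_3$ is parallel to the tangent line to $\partial\Omega$ at $q_2$. A $q$-periodic orbit is a cyclic sequence $p_0,\dots,p_{q-1}$ of boundary points such that every triple $(p_{j-1},p_j,p_{j+1})$ (indices mod $q$) consists of consecutive bounces. *)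

From Stdlib Require Import Reals.
From Coquelicot Require Import Coquelicot.
Open Scope R_scope.

Definition pt := (R * R)%type.

Definition padd (x y : pt) : pt := (fst x + fst y, snd x + snd y).
Definition psub (x y : pt) : pt := (fst x - fst y, snd x - snd y).
Definition pscal (a : R) (x : pt) : pt := (a * fst x, a * snd x).
Definition dot (x y : pt) : R := fst x * fst y + snd x * snd y.
Definition cross (x y : pt) : R := fst x * snd y - snd x * fst y.
Definition rotJ (v : pt) : pt := (- snd v, fst v).
Definition dist2 (x y : pt) : R := dot (psub x y) (psub x y).

Definition is_open (Om : pt -> Prop) : Prop :=
  forall x, Om x -> exists e, 0 < e /\ forall y, dist2 x y < e * e -> Om y.
Definition in_closure (Om : pt -> Prop) (x : pt) : Prop :=
  forall e, 0 < e -> exists y, Om y /\ dist2 x y < e * e.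
Definition in_boundary (Om : pt -> Prop) (x : pt) : Prop :=
  in_closure Om x /\ ~ Om x.
Definition bounded (Om : pt -> Prop) : Prop :=
  exists M, forall x, Om x -> dot x x <= M.

(** A bounded strictly convex planar domain: nonempty, open, bounded, and the
    open segment between any two distinct points of the closure lies in Om
    (this implies convexity, hence connectedness). *)
Definition strictly_convex_domain (Om : pt -> Prop) : Prop :=
  (exists x, Om x) /\ is_open Om /\ bounded Om /\
  forall x y l, in_closure Om x -> in_closure Om y -> x <> y -> 0 < l < 1 ->
    Om (padd (pscal (1 - l) x) (pscal l y)).

(** ** C^1 boundary: a regular C^1, 1-periodic parametrization [g] of the
    boundary, injective on one period, with derivative [dg], traversed in the
    positive (counterclockwise) sense, i.e. Om lies to the left of [dg]. *)
Definition ccw_C1_boundary_param (Om : pt -> Prop) (g dg : R -> pt) : Prop :=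
  (forall t, g (t + 1) = g t) /\
  (forall s t, 0 <= s < 1 -> 0 <= t < 1 -> g s = g t -> s = t) /\
  (forall t, is_derive (fun s => fst (g s)) t (fst (dg t))) /\
  (forall t, is_derive (fun s => snd (g s)) t (snd (dg t))) /\
  (forall t, continuous (fun s => fst (dg s)) t) /\
  (forall t, continuous (fun s => snd (dg s)) t) /\
  (forall t, dg t <> (0, 0)) /\
  (forall x, in_boundary Om x <-> exists t, g t = x) /\
  (forall t, exists e, 0 < e /\
     forall s, 0 < s < e -> Om (padd (g t) (pscal s (rotJ (dg t))))).

Definition reflect (Ob u x : pt) : pt :=
  let w := psub x Ob in
  padd Ob (psub (pscal (2 * dot w u / dot u u) u) w).

Definition axially_symmetric (Om : pt -> Prop) (Ob u : pt) : Prop :=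
  forall x, Om x <-> Om (reflect Ob u x).

(** ** Polygons: a q-gon is [p : nat -> pt], vertices [p 0, ..., p (q-1)],
    indices read modulo q. *)

Definition in_Pq (Om : pt -> Prop) (g : R -> pt) (Ob u : pt) (q : nat)
  (p : nat -> pt) : Prop :=
  (* vertices on the boundary, in positive cyclic order *)
  (exists t : nat -> R,
      (forall j, (j < q)%nat -> g (t j) = p j) /\
      (forall j, (S j < q)%nat -> t j < t (S j)) /\
      t (pred q) < t 0%nat + 1) /\
  (forall j, (j < q)%nat -> exists k, (k < q)%nat /\ reflect Ob u (p j) = p k) /\
  p 0%nat = Ob.

(** (shoelace) area of the polygon *)
Definition area (q : nat) (p : nat -> pt) : R :=
  / 2 * sum_f_R0 (fun j => cross (p j) (p ((S j) mod q)%nat)) (pred q).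

(** ** Symplectic billiard.  [bounce g dg q1 q2 q3]: the chord (q1,q2) is sent
    to (q2,q3): q1,q2,q3 on the boundary and q3 is the point of the boundary
    such that the line q1 q3 is parallel to the tangent at q2; when q3 = q1
    this line is the tangent line at q1, i.e. it is parallel to the tangent
    at q2. *)
Definition bounce (g dg : R -> pt) (q1 q2 q3 : pt) : Prop :=
  exists t1 t2 t3, g t1 = q1 /\ g t2 = q2 /\ g t3 = q3 /\
    cross (psub q3 q1) (dg t2) = 0 /\
    (q3 = q1 -> cross (dg t1) (dg t2) = 0).

Definition periodic_orbit (g dg : R -> pt) (q : nat) (p : nat -> pt) : Prop :=
  forall j, (j < q)%nat ->
    bounce g dg (p ((j + q - 1) mod q)%nat) (p j) (p ((S j) mod q)%nat).

From Stdlib Require Import Reals Lra Lia Psatz ZArith.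
From Coquelicot Require Import Coquelicot.
Open Scope R_scope.

(* In axial coordinates (position along the axis, signed distance from it),
   strict convexity forces the boundary to meet the axis in exactly two
   points, O = g T0 and g ts, and the two arcs between them have constant
   lateral sign and strictly monotone axial coordinate.  Hence the arc parameter
   is encoded by an increasing key in [0, 2] that the reflection turns into
   2 - key, so the reflection reverses the cyclic order of the vertices:
   p_i is mirrored to p_(q-i).  For an off-axis vertex p_j, sliding p_j along
   the boundary and p_(q-j) along its mirror image stays inside P^(q); the area
   is maximal at the original position and its derivative there is
   [g', p_(j+1) - p_(j-1)], which gives the billiard condition.  At the axis
   vertices the tangent and p_(j+1) - p_(j-1) are both orthogonal to the axis. *)

Definition next_idx (q j : nat) : nat := (S j mod q)%nat.
Definition prev_idx (q j : nat) : nat := ((j + q - 1) mod q)%nat.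
Definition mirror_idx (q j : nat) : nat := if Nat.eq_dec j 0 then 0%nat else (q - j)%nat.

Lemma next_idx_spec q j : (j < q)%nat -> next_idx q j = if Nat.eq_dec (S j) q then 0%nat else S j.
Proof.
  intros Hj. unfold next_idx. destruct (Nat.eq_dec (S j) q) as [<-|Hne].
  - apply Nat.Div0.mod_same.
  - apply Nat.mod_small. lia.
Qed.

Lemma prev_idx_spec q j : (j < q)%nat ->
  prev_idx q j = if Nat.eq_dec j 0 then (q - 1)%nat else (j - 1)%nat.
Proof.
  intros Hj. unfold prev_idx. destruct (Nat.eq_dec j 0) as [->|Hne].
  - apply Nat.mod_small. lia.
  - replace (j + q - 1)%nat with ((j - 1) + 1 * q)%nat by lia.
    rewrite Nat.Div0.mod_add. apply Nat.mod_small. lia.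
Qed.

Ltac index_arith :=
  unfold mirror_idx in *;
  repeat match goal with
  | |- context [next_idx ?q ?j] => rewrite (next_idx_spec q j) by lia
  | |- context [prev_idx ?q ?j] => rewrite (prev_idx_spec q j) by lia
  | H : context [next_idx ?q ?j] |- _ => rewrite (next_idx_spec q j) in H by lia
  | H : context [prev_idx ?q ?j] |- _ => rewrite (prev_idx_spec q j) in H by lia
  | |- context [if Nat.eq_dec ?a ?b then _ else _] => destruct (Nat.eq_dec a b)
  | H : context [if Nat.eq_dec ?a ?b then _ else _] |- _ => destruct (Nat.eq_dec a b)
  end;
  lia.

Lemma next_idx_lt q j : (j < q)%nat -> (next_idx q j < q)%nat.
Proof. intros; index_arith. Qed.

Lemma prev_idx_lt q j : (j < q)%nat -> (prev_idx q j < q)%nat.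
Proof. intros; index_arith. Qed.

Lemma mirror_idx_lt q j : (j < q)%nat -> (mirror_idx q j < q)%nat.
Proof. intros; index_arith. Qed.

Lemma next_prev_idx q j : (j < q)%nat -> next_idx q (prev_idx q j) = j.
Proof. intros; index_arith. Qed.

Lemma next_idx_neq q j : (2 <= q)%nat -> (j < q)%nat -> next_idx q j <> j.
Proof. intros; index_arith. Qed.

Lemma prev_idx_neq q j : (2 <= q)%nat -> (j < q)%nat -> prev_idx q j <> j.
Proof. intros; index_arith. Qed.

Lemma prev_idx_of_next q i j : (i < q)%nat -> (j < q)%nat -> next_idx q i = j -> i = prev_idx q j.
Proof. intros; index_arith. Qed.

Lemma mirror_next_idx q j : (j < q)%nat ->
  mirror_idx q (next_idx q j) = prev_idx q (mirror_idx q j).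
Proof. intros; index_arith. Qed.

Lemma mirror_prev_idx q j : (j < q)%nat ->
  mirror_idx q (prev_idx q j) = next_idx q (mirror_idx q j).
Proof. intros; index_arith. Qed.

Lemma mirror_idx_involutive q j : (j < q)%nat -> mirror_idx q (mirror_idx q j) = j.
Proof. intros; index_arith. Qed.

Lemma prev_eq_next_idx q j : (j < q)%nat -> prev_idx q j = next_idx q j -> q = 2%nat \/ q = 1%nat.
Proof. intros; index_arith. Qed.

Lemma order_reversing_rel (m : nat) (M : nat -> nat -> Prop) :
  (forall i, (1 <= i <= m)%nat -> exists k, (1 <= k <= m)%nat /\ M i k) ->
  (forall i j k l, (1 <= i < j)%nat -> (j <= m)%nat ->
     (1 <= k <= m)%nat -> (1 <= l <= m)%nat -> M i k -> M j l -> (l < k)%nat) ->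
  forall i k, (1 <= i <= m)%nat -> (1 <= k <= m)%nat -> M i k -> k = (m + 1 - i)%nat.
Proof.
  intros Hex Hrev.
  assert (upper : forall i k, (1 <= i <= m)%nat -> (1 <= k <= m)%nat -> M i k ->
            (k + i <= m + 1)%nat).
  { induction i as [|i IH]; intros k Hi Hk Hik; [lia|].
    destruct (Nat.eq_dec i 0) as [->|Hi0]; [lia|].
    destruct (Hex i ltac:(lia)) as [k' [Hk' Hik']].
    specialize (IH k' ltac:(lia) Hk' Hik').
    pose proof (Hrev i (S i) k' k ltac:(lia) ltac:(lia) Hk' Hk Hik' Hik). lia. }
  assert (lower : forall n i k, (i + n = m)%nat -> (1 <= i)%nat -> (1 <= k <= m)%nat ->
            M i k -> (m + 1 <= k + i)%nat).
  { induction n as [|n IH]; intros i k Hn Hi Hk Hik; [lia|].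
    destruct (Hex (S i) ltac:(lia)) as [k' [Hk' Hik']].
    specialize (IH (S i) k' ltac:(lia) ltac:(lia) Hk' Hik').
    pose proof (Hrev i (S i) k k' ltac:(lia) ltac:(lia) Hk Hk' Hik Hik'). lia. }
  intros i k Hi Hk Hik.
  specialize (upper i k Hi Hk Hik).
  specialize (lower (m - i)%nat i k ltac:(lia) ltac:(lia) Hk Hik). lia.
Qed.

Lemma increasing_seq_lt (f : nat -> R) (n : nat) :
  (forall i, (i < n)%nat -> f i < f (S i)) ->
  forall i j, (i < j <= n)%nat -> f i < f j.
Proof.
  intros Hf i j [Hij Hjn]. induction Hij as [|j Hij IH].
  - apply Hf; lia.
  - apply Rlt_trans with (f j); [apply IH; lia | apply Hf; lia].
Qed.

Lemma sum_f_R0_change_one (f h : nat -> R) (n a : nat) :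
  (a <= n)%nat -> (forall i, (i <= n)%nat -> i <> a -> f i = h i) ->
  sum_f_R0 f n = sum_f_R0 h n + (f a - h a).
Proof.
  revert a. induction n as [|n IH]; intros a Ha Hfh; simpl.
  - replace a with 0%nat by lia. ring.
  - destruct (Nat.eq_dec a (S n)) as [->|Hne].
    + rewrite (sum_eq f h n) by (intros; apply Hfh; lia). ring.
    + rewrite (IH a) by (lia || (intros; apply Hfh; lia)).
      rewrite (Hfh (S n)) by lia. ring.
Qed.

Definition upd {A : Type} (f : nat -> A) (j : nat) (x : A) : nat -> A :=
  fun i => if Nat.eq_dec i j then x else f i.

Lemma upd_id {A : Type} (f : nat -> A) (j : nat) : forall i, upd f j (f j) i = f i.
Proof. intros i. unfold upd. destruct (Nat.eq_dec i j) as [->|]; reflexivity. Qed.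

Lemma upd_comm {A : Type} (f : nat -> A) j k x y : j <> k ->
  forall i, upd (upd f j x) k y i = upd (upd f k y) j x i.
Proof. intros Hjk i. unfold upd. repeat destruct Nat.eq_dec; congruence. Qed.

Lemma upd2_increasing (f : nat -> R) (n a b : nat) (x y : R) :
  (forall i, (i < n)%nat -> f i < f (S i)) -> (0 < a)%nat -> (a < b < n)%nat ->
  f (pred a) < x < f (S a) -> f (pred b) < y < f (S b) -> x < y ->
  forall i, (i < n)%nat -> upd (upd f a x) b y i < upd (upd f a x) b y (S i).
Proof.
  intros Hf Ha Hab Hx Hy Hxy i Hi. unfold upd.
  destruct (Nat.eq_dec i b); destruct (Nat.eq_dec i a);
    destruct (Nat.eq_dec (S i) b); destruct (Nat.eq_dec (S i) a); subst; try lia;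
    try (apply Hf; lia); try lra.
  all: replace i with (pred (S i)) by lia; lra.
Qed.

(** * Axial coordinates *)

Definition axial (Ob u x : pt) : R := dot (psub x Ob) u.
Definition lateral (Ob u x : pt) : R := cross u (psub x Ob).
Definition reflect_lin (u v : pt) : pt := psub (pscal (2 * dot v u / dot u u) u) v.

Lemma reflect_Ob Ob u : reflect Ob u Ob = Ob.
Proof.
  destruct Ob as [o1 o2], u as [u1 u2].
  unfold reflect, dot, psub, padd, pscal; simpl. f_equal; unfold Rdiv; ring.
Qed.

Lemma perp_cross u a b : u <> (0, 0) -> dot a u = 0 -> dot b u = 0 -> cross a b = 0.
Proof.
  destruct u as [u1 u2], a as [a1 a2], b as [b1 b2]; unfold cross, dot; simpl.
  intros Hu Ha Hb.
  assert (E1 : u1 * (a1 * b2 - a2 * b1) = 0).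
  { transitivity (b2 * (a1 * u1 + a2 * u2) - a2 * (b1 * u1 + b2 * u2)); [ring|].
    rewrite Ha, Hb; ring. }
  assert (E2 : u2 * (a1 * b2 - a2 * b1) = 0).
  { transitivity (a1 * (b1 * u1 + b2 * u2) - b1 * (a1 * u1 + a2 * u2)); [ring|].
    rewrite Ha, Hb; ring. }
  apply Rmult_integral in E1; apply Rmult_integral in E2.
  destruct E1 as [->|]; [destruct E2 as [->|]|]; auto; contradiction.
Qed.

Lemma dot_self_pos u : u <> (0, 0) -> 0 < dot u u.
Proof.
  destruct u as [u1 u2]; unfold dot; simpl. intros Hu.
  destruct (Req_dec u1 0) as [->|H1]; [destruct (Req_dec u2 0) as [->|H2]|];
    [contradiction | nra | nra].
Qed.

Ltac coords :=
  repeat match goal with p : pt |- _ => destruct p end;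
  unfold axial, lateral, reflect_lin, reflect, dist2, cross, dot, psub, padd, pscal in *;
  simpl in *.

Lemma axial_reflect Ob u x : u <> (0, 0) ->
  axial Ob u (reflect Ob u x) = axial Ob u x.
Proof. intros Hu; pose proof (dot_self_pos u Hu). coords. field. lra. Qed.

Lemma lateral_reflect Ob u x : u <> (0, 0) ->
  lateral Ob u (reflect Ob u x) = - lateral Ob u x.
Proof. intros Hu; pose proof (dot_self_pos u Hu). coords. field. lra. Qed.

Lemma axial_lateral_inj Ob u x y : u <> (0, 0) ->
  axial Ob u x = axial Ob u y -> lateral Ob u x = lateral Ob u y -> x = y.
Proof.
  intros Hu Ha Hl; pose proof (dot_self_pos u Hu) as Huu.
  destruct u as [u1 u2], x as [x1 x2], y as [y1 y2], Ob as [o1 o2].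
  unfold axial, lateral, cross, dot, psub in *; simpl in *.
  assert (E1 : (x1 - o1) * (u1 * u1 + u2 * u2) = (y1 - o1) * (u1 * u1 + u2 * u2)).
  { transitivity (u1 * ((x1 - o1) * u1 + (x2 - o2) * u2) - u2 * (u1 * (x2 - o2) - u2 * (x1 - o1)));
      [ring | rewrite Ha, Hl; ring]. }
  assert (E2 : (x2 - o2) * (u1 * u1 + u2 * u2) = (y2 - o2) * (u1 * u1 + u2 * u2)).
  { transitivity (u2 * ((x1 - o1) * u1 + (x2 - o2) * u2) + u1 * (u1 * (x2 - o2) - u2 * (x1 - o1)));
      [ring | rewrite Ha, Hl; ring]. }
  apply Rmult_eq_reg_r in E1; [|lra]. apply Rmult_eq_reg_r in E2; [|lra].
  f_equal; lra.
Qed.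

Lemma reflect_involutive Ob u x : u <> (0, 0) -> reflect Ob u (reflect Ob u x) = x.
Proof.
  intros Hu. apply (axial_lateral_inj Ob u); auto.
  - rewrite !axial_reflect; auto.
  - rewrite !lateral_reflect; auto; ring.
Qed.

Lemma dist2_reflect Ob u x y : u <> (0, 0) ->
  dist2 (reflect Ob u x) (reflect Ob u y) = dist2 x y.
Proof. intros Hu; pose proof (dot_self_pos u Hu). coords. field. lra. Qed.

Lemma dot_sub_reflect Ob u x : u <> (0, 0) -> dot (psub x (reflect Ob u x)) u = 0.
Proof. intros Hu; pose proof (dot_self_pos u Hu). coords. field. lra. Qed.

Lemma axial_comb Ob u l a b :
  axial Ob u (padd (pscal (1 - l) a) (pscal l b)) = (1 - l) * axial Ob u a + l * axial Ob u b.
Proof. coords. ring. Qed.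

Lemma lateral_comb Ob u l a b :
  lateral Ob u (padd (pscal (1 - l) a) (pscal l b)) =
  (1 - l) * lateral Ob u a + l * lateral Ob u b.
Proof. coords. ring. Qed.

Lemma axial_Ob Ob u : axial Ob u Ob = 0.
Proof. coords. ring. Qed.

Lemma lateral_Ob Ob u : lateral Ob u Ob = 0.
Proof. coords. ring. Qed.

Lemma ratio_bounds x y : 0 < x < y \/ y < x < 0 -> 0 < x / y < 1.
Proof.
  intros [H|H].
  - split; [apply Rdiv_lt_0_compat; lra|].
    apply (Rmult_lt_reg_r y); [lra|]. unfold Rdiv. rewrite Rmult_assoc, Rinv_l; lra.
  - replace (x / y) with ((- x) / (- y)) by (field; lra).
    split; [apply Rdiv_lt_0_compat; lra|].
    apply (Rmult_lt_reg_r (- y)); [lra|]. unfold Rdiv. rewrite Rmult_assoc, Rinv_l; lra.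
Qed.

Lemma close_same_side a b x : Rabs (x - a) < Rabs (a - b) -> 0 < (x - b) * (a - b).
Proof. unfold Rabs. repeat destruct Rcase_abs; nra. Qed.

Lemma in_closure_of_in (Om : pt -> Prop) x : Om x -> in_closure Om x.
Proof.
  intros H e He. exists x. split; [exact H|]. unfold dist2, dot, psub; simpl. nra.
Qed.

Section ConvexGeometry.
Variables (Om : pt -> Prop) (Ob u : pt).
Hypotheses (HOm : strictly_convex_domain Om) (Hu : u <> (0, 0))
  (Hsym : axially_symmetric Om Ob u).

Lemma closure_reflect x : in_closure Om x -> in_closure Om (reflect Ob u x).
Proof.
  intros Hx e He. destruct (Hx e He) as [y [Hy Hd]].
  exists (reflect Ob u y). split; [exact (proj1 (Hsym y) Hy)|]. rewrite dist2_reflect; auto.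
Qed.

Lemma boundary_reflect x : in_boundary Om x -> in_boundary Om (reflect Ob u x).
Proof.
  intros [Hc Hn]. split; [apply closure_reflect; exact Hc|].
  intros H. apply Hn. apply (proj1 (Hsym _)) in H. rewrite reflect_involutive in H; auto.
Qed.

Lemma between_in a b c l : in_closure Om a -> in_closure Om c -> a <> c -> 0 < l < 1 ->
  axial Ob u b = (1 - l) * axial Ob u a + l * axial Ob u c ->
  lateral Ob u b = (1 - l) * lateral Ob u a + l * lateral Ob u c -> Om b.
Proof.
  intros Ha Hc Hac Hl Hax Hlat.
  replace b with (padd (pscal (1 - l) a) (pscal l c)).
  - destruct HOm as (_ & _ & _ & Hconv). apply Hconv; auto.
  - apply (axial_lateral_inj Ob u); auto; rewrite ?axial_comb, ?lateral_comb; auto.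
Qed.

Lemma axis_not_between a b c : in_closure Om a -> in_boundary Om b -> in_closure Om c ->
  lateral Ob u a = 0 -> lateral Ob u b = 0 -> lateral Ob u c = 0 ->
  ~ (axial Ob u a < axial Ob u b < axial Ob u c).
Proof.
  intros Ha [_ Hb] Hc La Lb Lc Hlt. apply Hb.
  apply (between_in a b c ((axial Ob u b - axial Ob u a) / (axial Ob u c - axial Ob u a)));
    auto.
  - intros ->. lra.
  - apply ratio_bounds. lra.
  - field. lra.
  - rewrite La, Lb, Lc. ring.
Qed.

Lemma axis_boundary_three x y z :
  in_boundary Om x -> in_boundary Om y -> in_boundary Om z ->
  lateral Ob u x = 0 -> lateral Ob u y = 0 -> lateral Ob u z = 0 ->
  x <> y -> y <> z -> x <> z -> False.
Proof.
  intros Hx Hy Hz Lx Ly Lz Hxy Hyz Hxz.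
  assert (D : forall a b, lateral Ob u a = 0 -> lateral Ob u b = 0 -> a <> b ->
            axial Ob u a <> axial Ob u b).
  { intros a b La Lb Hab E. apply Hab, (axial_lateral_inj Ob u); congruence. }
  pose proof (D x y Lx Ly Hxy); pose proof (D y z Ly Lz Hyz); pose proof (D x z Lx Lz Hxz).
  assert (NB : forall a b c, in_boundary Om a -> in_boundary Om b -> in_boundary Om c ->
            lateral Ob u a = 0 -> lateral Ob u b = 0 -> lateral Ob u c = 0 ->
            ~ (axial Ob u a < axial Ob u b < axial Ob u c))
    by (intros a b c Ha Hb Hc; apply axis_not_between; [apply Ha | exact Hb | apply Hc]).
  destruct (Rlt_dec (axial Ob u x) (axial Ob u y)), (Rlt_dec (axial Ob u y) (axial Ob u z)),
    (Rlt_dec (axial Ob u x) (axial Ob u z)).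
  all: first
    [ now apply (NB x y z); auto; lra | now apply (NB z y x); auto; lra
    | now apply (NB y x z); auto; lra | now apply (NB z x y); auto; lra
    | now apply (NB x z y); auto; lra | now apply (NB y z x); auto; lra ].
Qed.

Lemma boundary_chord_ratio x y : in_boundary Om x -> in_boundary Om y ->
  axial Ob u x = axial Ob u y -> ~ (0 < lateral Ob u x / lateral Ob u y < 1).
Proof.
  intros Hx Hy Hax Hr.
  (* otherwise x lies strictly inside the chord from reflect y to y *)
  assert (Ly : lateral Ob u y <> 0).
  { intros E. rewrite E in Hr. unfold Rdiv in Hr. rewrite Rinv_0 in Hr. lra. }
  apply (proj2 Hx).
  apply (between_in (reflect Ob u y) x y ((1 + lateral Ob u x / lateral Ob u y) / 2)).
  - apply closure_reflect, Hy.
  - apply Hy.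
  - intros E. apply (f_equal (lateral Ob u)) in E. rewrite lateral_reflect in E; auto. lra.
  - lra.
  - rewrite axial_reflect; auto. lra.
  - rewrite lateral_reflect; auto. field. exact Ly.
Qed.

Lemma boundary_same_side x y : in_boundary Om x -> in_boundary Om y ->
  axial Ob u x = axial Ob u y -> 0 < lateral Ob u x * lateral Ob u y -> x = y.
Proof.
  intros Hx Hy Hax Hpos.
  assert (Lx : lateral Ob u x <> 0) by (intros E; rewrite E in Hpos; lra).
  assert (Ly : lateral Ob u y <> 0) by (intros E; rewrite E in Hpos; lra).
  assert (Hr : 0 < lateral Ob u x / lateral Ob u y).
  { replace (lateral Ob u x / lateral Ob u y)
      with (lateral Ob u x * lateral Ob u y / (lateral Ob u y * lateral Ob u y)) by (field; auto).
    apply Rdiv_lt_0_compat; nra. }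
  destruct (Rtotal_order (lateral Ob u x / lateral Ob u y) 1) as [Hlt|[Heq|Hgt]].
  - exfalso. apply (boundary_chord_ratio x y); auto.
  - apply (axial_lateral_inj Ob u); auto.
    apply (Rmult_eq_reg_r (/ lateral Ob u y)); [|apply Rinv_neq_0_compat; exact Ly].
    rewrite Rinv_r by exact Ly. exact Heq.
  - exfalso. apply (boundary_chord_ratio y x); auto.
    replace (lateral Ob u y / lateral Ob u x) with (/ (lateral Ob u x / lateral Ob u y))
      by (field; auto).
    split; [apply Rinv_0_lt_compat; lra|].
    rewrite <- Rinv_1. apply Rinv_lt_contravar; lra.
Qed.

Lemma axis_strip O2 x : in_boundary Om Ob -> in_boundary Om O2 -> in_boundary Om x ->
  lateral Ob u O2 = 0 -> O2 <> Ob -> lateral Ob u x <> 0 ->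
  0 < axial Ob u x / axial Ob u O2 < 1.
Proof.
  intros HO HO2 Hx L2 HO2O Lx.
  (* The midpoint m of the chord [x, reflect x] is an interior axis point at the
     height of x; of the axis points Ob, m, O2 only m can lie between the others. *)
  set (m := padd (pscal (1 - / 2) x) (pscal (/ 2) (reflect Ob u x))).
  assert (Hm : Om m).
  { destruct HOm as (_ & _ & _ & Hconv). apply Hconv; [apply Hx | apply closure_reflect, Hx | |lra].
    intros E. apply (f_equal (lateral Ob u)) in E. rewrite lateral_reflect in E; auto. lra. }
  assert (Am : axial Ob u m = axial Ob u x).
  { unfold m. rewrite axial_comb, axial_reflect; auto. lra. }
  assert (Lm : lateral Ob u m = 0).
  { unfold m. rewrite lateral_comb, lateral_reflect; auto. lra. }
  assert (L0 := lateral_Ob Ob u). assert (A0 := axial_Ob Ob u).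
  assert (NB := axis_not_between).
  assert (Hk : axial Ob u O2 <> 0).
  { intros E. apply HO2O, (axial_lateral_inj Ob u); congruence. }
  assert (Hh0 : axial Ob u x <> 0).
  { intros E. apply (proj2 HO). replace Ob with m; [exact Hm|].
    apply (axial_lateral_inj Ob u); congruence. }
  assert (Hhk : axial Ob u x <> axial Ob u O2).
  { intros E. apply (proj2 HO2). replace O2 with m; [exact Hm|].
    apply (axial_lateral_inj Ob u); congruence. }
  assert (Cm := in_closure_of_in Om m Hm).
  assert (N1 := NB m Ob O2 Cm HO (proj1 HO2) Lm L0 L2).
  assert (N2 := NB O2 Ob m (proj1 HO2) HO Cm L2 L0 Lm).
  assert (N3 := NB m O2 Ob Cm HO2 (proj1 HO) Lm L2 L0).
  assert (N4 := NB Ob O2 m (proj1 HO) HO2 Cm L0 L2 Lm).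
  apply ratio_bounds. rewrite Am, A0 in *. lra.
Qed.

End ConvexGeometry.

Definition has_vderive (f : R -> pt) (t : R) (v : pt) : Prop :=
  derivable_pt_lim (fun s => fst (f s)) t (fst v) /\
  derivable_pt_lim (fun s => snd (f s)) t (snd v).

Lemma derivable_pt_lim_eq f x l l' : derivable_pt_lim f x l -> l = l' -> derivable_pt_lim f x l'.
Proof. intros H <-. exact H. Qed.

Ltac derive_poly :=
  repeat first
    [ eassumption
    | apply derivable_pt_lim_const
    | apply derivable_pt_lim_minus
    | apply derivable_pt_lim_plus
    | apply derivable_pt_lim_mult
    | apply derivable_pt_lim_opp ].

Lemma vderive_const c t : has_vderive (fun _ => c) t (0, 0).
Proof. split; apply derivable_pt_lim_const. Qed.

Lemma vderive_sub f h t v w : has_vderive f t v -> has_vderive h t w ->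
  has_vderive (fun s => psub (f s) (h s)) t (psub v w).
Proof. intros [] []. split; simpl; derive_poly. Qed.

Lemma vderive_reflect Ob u f t v : has_vderive f t v ->
  has_vderive (fun s => reflect Ob u (f s)) t (reflect_lin u v).
Proof.
  intros []. unfold reflect, reflect_lin, dot, psub, padd, pscal, Rdiv. split; simpl;
    (eapply derivable_pt_lim_eq; [derive_poly | cbv beta; ring]).
Qed.

Lemma dot_derive f t v w : has_vderive f t v ->
  derivable_pt_lim (fun s => dot (f s) w) t (dot v w).
Proof.
  intros []. unfold dot. eapply derivable_pt_lim_eq; [derive_poly | cbv beta; ring].
Qed.

Lemma cross_derive f h t v w : has_vderive f t v -> has_vderive h t w ->
  derivable_pt_lim (fun s => cross (f s) (h s)) t (cross v (h t) + cross (f t) w).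
Proof.
  intros [] []. unfold cross. eapply derivable_pt_lim_eq; [derive_poly | cbv beta; ring].
Qed.

Lemma derivable_pt_lim_local_max f c l d : derivable_pt_lim f c l -> 0 < d ->
  (forall x, c - d < x < c + d -> f x <= f c) -> l = 0.
Proof.
  intros H Hd Hmax.
  change l with (derive_pt f c (exist _ l H)).
  apply (deriv_maximum f (c - d) (c + d)); try lra.
  intros x H1 H2. apply Hmax. lra.
Qed.

Lemma derivable_pt_lim_local_min f c l d : derivable_pt_lim f c l -> 0 < d ->
  (forall x, c - d < x < c + d -> f c <= f x) -> l = 0.
Proof.
  intros H Hd Hmin.
  change l with (derive_pt f c (exist _ l H)).
  apply (deriv_minimum f (c - d) (c + d)); try lra.
  intros x H1 H2. apply Hmin. lra.
Qed.

Lemma continuity_of_derivable_pt_lim (f df : R -> R) :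
  (forall t, derivable_pt_lim f t (df t)) -> continuity f.
Proof. intros H t. apply derivable_continuous_pt. exact (exist _ (df t) (H t)). Qed.

Lemma IVT_open (f : R -> R) x y : continuity f -> x < y -> f x * f y < 0 ->
  exists z, x < z < y /\ f z = 0.
Proof.
  intros Hc Hxy Hneg.
  destruct (IVT_cor f x y Hc ltac:(lra) ltac:(lra)) as [z [Hz Fz]].
  exists z. split; [|exact Fz].
  split; apply Rnot_le_lt; intros Hle;
    [replace z with x in Fz by lra | replace z with y in Fz by lra];
    rewrite Fz in Hneg; lra.
Qed.

Lemma increasing_of_injective (f : R -> R) a b : continuity f ->
  (forall x, a < x <= b -> f a < f x) ->
  (forall x y, a < x <= b -> a < y <= b -> f x = f y -> x = y) ->
  forall x y, a <= x < y -> y <= b -> f x < f y.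
Proof.
  intros Hc Hbase Hinj x y Hxy Hyb.
  destruct (Req_dec x a) as [->|Hxa]; [apply Hbase; lra|].
  destruct (Rtotal_order (f x) (f y)) as [Hlt|[Heq|Hgt]]; [exact Hlt| |]; exfalso.
  - apply Hinj in Heq; lra.
  - destruct (IVT_open (fun s => f s - f y) a x) as [z [Hz Fz]].
    + intros t. apply continuity_pt_minus;
        [apply Hc | apply continuity_pt_const; intros ? ?; reflexivity].
    + lra.
    + assert (f a < f y) by (apply Hbase; lra). nra.
    + assert (Ezy : f z = f y) by lra. apply Hinj in Ezy; lra.
Qed.

Section Parametrization.
Variables (Om : pt -> Prop) (g dg : R -> pt).
Hypothesis Hg : ccw_C1_boundary_param Om g dg.

Lemma g_periodic_nat n t : g (t + INR n) = g t.
Proof.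
  destruct Hg as [Hper _]. revert t. induction n as [|n IH]; intros t.
  - simpl. rewrite Rplus_0_r. reflexivity.
  - rewrite S_INR, <- Rplus_assoc, Hper. apply IH.
Qed.

Lemma g_periodic_Z z t : g (t + IZR z) = g t.
Proof.
  destruct (Z_le_gt_dec 0 z) as [Hz|Hz].
  - destruct (IZN z Hz) as [n ->]. rewrite <- INR_IZR_INZ. apply g_periodic_nat.
  - destruct (IZN (- z) ltac:(lia)) as [n Hn].
    replace z with (- Z.of_nat n)%Z by lia. rewrite opp_IZR, <- INR_IZR_INZ.
    rewrite <- (g_periodic_nat n (t + - INR n)). f_equal. ring.
Qed.

Lemma exists_shift_into_period t a : exists z, a <= t - IZR z < a + 1.
Proof.
  exists (up (t - a) - 1)%Z. rewrite minus_IZR. destruct (archimed (t - a)). simpl. lra.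
Qed.

Lemma g_in_boundary t : in_boundary Om (g t).
Proof. destruct Hg as (_ & _ & _ & _ & _ & _ & _ & Hb & _). apply Hb. exists t. reflexivity. Qed.

Lemma g_param_in_period x a : in_boundary Om x -> exists t, a <= t < a + 1 /\ g t = x.
Proof.
  intros Hx. destruct Hg as (_ & _ & _ & _ & _ & _ & _ & Hb & _).
  destruct (proj1 (Hb x) Hx) as [t0 Ht0].
  destruct (exists_shift_into_period t0 a) as [z Hz].
  exists (t0 - IZR z). split; [exact Hz|].
  rewrite <- (g_periodic_Z z). replace (t0 - IZR z + IZR z) with t0 by ring. exact Ht0.
Qed.

Lemma g_inj_period a s t : a <= s < a + 1 -> a <= t < a + 1 -> g s = g t -> s = t.
Proof.
  intros Hs Ht E. destruct Hg as (_ & Hinj & _).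
  destruct (exists_shift_into_period s 0) as [zs Hzs].
  destruct (exists_shift_into_period t 0) as [zt Hzt].
  assert (E' : s - IZR zs = t - IZR zt).
  { apply Hinj; [lra | lra |].
    rewrite <- (g_periodic_Z zs (s - IZR zs)), <- (g_periodic_Z zt (t - IZR zt)).
    replace (s - IZR zs + IZR zs) with s by ring. replace (t - IZR zt + IZR zt) with t by ring.
    exact E. }
  assert (Hz : (zs - zt = 0)%Z).
  { assert (Hlo : -1 < IZR (zs - zt)) by (rewrite minus_IZR; lra).
    assert (Hhi : IZR (zs - zt) < 1) by (rewrite minus_IZR; lra).
    apply lt_IZR in Hlo. apply lt_IZR in Hhi. lia. }
  assert (IZR zs = IZR zt) by (f_equal; lia). lra.
Qed.

Lemma g_vderive t : has_vderive g t (dg t).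
Proof.
  destruct Hg as (_ & _ & H1 & H2 & _). split; apply is_derive_Reals; auto.
Qed.

Lemma axial_g_derive Ob u t :
  derivable_pt_lim (fun s => axial Ob u (g s)) t (dot (dg t) u).
Proof.
  unfold axial. eapply derivable_pt_lim_eq.
  - apply dot_derive, vderive_sub; [apply g_vderive | apply vderive_const].
  - unfold dot, psub; simpl; ring.
Qed.

Lemma lateral_g_derive Ob u t :
  derivable_pt_lim (fun s => lateral Ob u (g s)) t (cross u (dg t)).
Proof.
  unfold lateral. eapply derivable_pt_lim_eq.
  - apply cross_derive; [apply vderive_const|].
    apply vderive_sub; [apply g_vderive | apply vderive_const].
  - unfold cross, psub; simpl; ring.
Qed.

End Parametrization.

Definition closed_param (q : nat) (t : nat -> R) (i : nat) : R :=
  if Nat.eq_dec i q then t 0%nat + 1 else t i.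

Lemma cyclic_order_iff q t : (1 <= q)%nat ->
  ((forall j, (S j < q)%nat -> t j < t (S j)) /\ t (pred q) < t 0%nat + 1) <->
  (forall i, (i < q)%nat -> closed_param q t i < closed_param q t (S i)).
Proof.
  intros Hq. unfold closed_param. split.
  - intros [Hinc Hlast] i Hi.
    destruct (Nat.eq_dec i q); [lia|]. destruct (Nat.eq_dec (S i) q) as [E|].
    + replace i with (pred q) by lia. exact Hlast.
    + apply Hinc. lia.
  - intros H. split.
    + intros j Hj. specialize (H j ltac:(lia)).
      destruct (Nat.eq_dec j q), (Nat.eq_dec (S j) q); try lia. exact H.
    + specialize (H (pred q) ltac:(lia)).
      destruct (Nat.eq_dec (pred q) q), (Nat.eq_dec (S (pred q)) q); try lia. exact H.
Qed.

Lemma closed_param_upd q t j k s r : j <> 0%nat -> j <> q -> k <> 0%nat -> k <> q ->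
  forall i, closed_param q (upd (upd t j s) k r) i = upd (upd (closed_param q t) j s) k r i.
Proof.
  intros Hj0 Hjq Hk0 Hkq i. unfold closed_param, upd.
  repeat destruct Nat.eq_dec; subst; congruence.
Qed.

Lemma area_upd q p j x : (2 <= q)%nat -> (j < q)%nat ->
  area q (upd p j x) =
  area q p + / 2 * cross (psub x (p j)) (psub (p (next_idx q j)) (p (prev_idx q j))).
Proof.
  intros Hq Hj. unfold area.
  set (f := fun i => cross (upd p j x i) (upd p j x (S i mod q))).
  set (h := fun i => cross (p i) (p (S i mod q))).
  set (m := fun i => if Nat.eq_dec i j then f i else h i).
  pose proof (prev_idx_lt q j Hj). pose proof (prev_idx_neq q j Hq Hj).
  pose proof (next_idx_neq q j Hq Hj).
  rewrite (sum_f_R0_change_one f m (pred q) (prev_idx q j)) by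
    (lia || (intros i Hi Hne; unfold m, f, h, upd;
             destruct (Nat.eq_dec i j) as [->|]; [reflexivity|];
             destruct (Nat.eq_dec (S i mod q) j) as [E|]; [|reflexivity];
             exfalso; apply Hne, prev_idx_of_next; [lia | lia | exact E])).
  rewrite (sum_f_R0_change_one m h (pred q) j) by
    (lia || (intros i _ Hne; unfold m; destruct Nat.eq_dec; [contradiction | reflexivity])).
  unfold m, f, h, upd. fold (next_idx q j) (next_idx q (prev_idx q j)).
  rewrite next_prev_idx by exact Hj.
  destruct (Nat.eq_dec (prev_idx q j) j); [contradiction|].
  destruct (Nat.eq_dec j j); [|contradiction].
  destruct (Nat.eq_dec (next_idx q j) j); [contradiction|].
  destruct x, (p j), (p (next_idx q j)), (p (prev_idx q j)). unfold cross, psub; simpl. ring.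
Qed.

Lemma area_ext q f h : (forall i, f i = h i) -> area q f = area q h.
Proof. intros E. unfold area. f_equal. apply sum_eq. intros i _. rewrite !E. reflexivity. Qed.

Lemma upd_other {A : Type} (f : nat -> A) j x i : i <> j -> upd f j x i = f i.
Proof. intros Hij. unfold upd. destruct Nat.eq_dec; [contradiction | reflexivity]. Qed.

(** Moving [p j] along a curve [g] and its mirror_idx vertex [p k] along the
    reflected curve: at the initial position the two first-order changes of the
    area coincide. *)
Lemma area_mirror_pair_derive (g dg : R -> pt) Ob u q p j k t0 :
  u <> (0, 0) -> (2 <= q)%nat -> (j < q)%nat -> (k < q)%nat -> j <> k ->
  has_vderive g t0 (dg t0) -> g t0 = p j -> reflect Ob u (p j) = p k ->
  p (next_idx q k) = reflect Ob u (p (prev_idx q j)) ->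
  p (prev_idx q k) = reflect Ob u (p (next_idx q j)) ->
  derivable_pt_lim (fun s => area q (upd (upd p j (g s)) k (reflect Ob u (g s)))) t0
    (cross (dg t0) (psub (p (next_idx q j)) (p (prev_idx q j)))).
Proof.
  intros Hu Hq Hj Hk Hjk Dg Gj Ek Enk Epk.
  apply derivable_pt_lim_ext with
    (f := fun s => area q p
            + / 2 * cross (psub (g s) (p j)) (psub (p (next_idx q j)) (p (prev_idx q j)))
            + / 2 * cross (psub (reflect Ob u (g s)) (p k))
                          (psub (upd p j (g s) (next_idx q k)) (upd p j (g s) (prev_idx q k)))).
  { intros s. rewrite area_upd, area_upd, (upd_other p j (g s) k) by auto. reflexivity. }
  assert (Dupd : forall i, has_vderive (fun s => upd p j (g s) i) t0
                   (if Nat.eq_dec i j then dg t0 else (0, 0))).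
  { intros i. unfold upd. destruct (Nat.eq_dec i j); [exact Dg | apply vderive_const]. }
  eapply derivable_pt_lim_eq.
  - apply derivable_pt_lim_plus; [apply derivable_pt_lim_plus; [apply derivable_pt_lim_const|]|];
      apply derivable_pt_lim_scal.
    + apply cross_derive; [|apply vderive_const].
      apply vderive_sub; [exact Dg | apply vderive_const].
    + apply cross_derive; [apply vderive_sub; [apply vderive_reflect, Dg | apply vderive_const] |].
      apply vderive_sub; apply Dupd.
  - cbv beta. rewrite Gj, Ek, !upd_id, Enk, Epk.
    pose proof (dot_self_pos u Hu).
    destruct (Nat.eq_dec (next_idx q k) j), (Nat.eq_dec (prev_idx q k) j);
      generalize (dg t0) (p k) (p (next_idx q j)) (p (prev_idx q j)); intros; coords; field; lra.
Qed.

(** * The two arcs cut out by the axis *)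

Section AxisStructure.
Variables (Om : pt -> Prop) (g dg : R -> pt) (Ob u : pt) (T0 : R).
Hypotheses (HOm : strictly_convex_domain Om) (Hg : ccw_C1_boundary_param Om g dg)
  (Hu : u <> (0, 0)) (Hsym : axially_symmetric Om Ob u) (HO : in_boundary Om Ob)
  (HT0 : g T0 = Ob).

Let g_bd t : in_boundary Om (g t) := g_in_boundary Om g dg Hg t.

Lemma g_inj_open s t : T0 < s < T0 + 1 -> T0 < t < T0 + 1 -> g s = g t -> s = t.
Proof. intros Hs Ht. apply (g_inj_period Om g dg Hg T0); lra. Qed.

Lemma g_ne_Ob t : T0 < t < T0 + 1 -> g t <> Ob.
Proof. intros Ht E. rewrite <- HT0 in E. apply (g_inj_period Om g dg Hg T0) in E; lra. Qed.

Lemma g_period_end : g (T0 + 1) = Ob.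
Proof. rewrite (proj1 Hg). exact HT0. Qed.

Lemma lateral_g_continuous : continuity (fun s => lateral Ob u (g s)).
Proof.
  apply (continuity_of_derivable_pt_lim _ (fun t => cross u (dg t))).
  exact (lateral_g_derive Om g dg Hg Ob u).
Qed.

Lemma exists_axis_param : exists ts, T0 < ts < T0 + 1 /\ lateral Ob u (g ts) = 0.
Proof.
  assert (Hoff : exists t1, T0 < t1 < T0 + 1 /\ lateral Ob u (g t1) <> 0).
  { destruct (Req_dec (lateral Ob u (g (T0 + / 4))) 0) as [E1|E1];
      [|exists (T0 + / 4); split; [lra | exact E1]].
    destruct (Req_dec (lateral Ob u (g (T0 + / 2))) 0) as [E2|E2];
      [|exists (T0 + / 2); split; [lra | exact E2]].
    exfalso. apply (axis_boundary_three Om Ob u HOm Hu Ob (g (T0 + / 4)) (g (T0 + / 2)));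
      auto using lateral_Ob.
    - intros E. symmetry in E. revert E. apply g_ne_Ob. lra.
    - intros E. apply g_inj_open in E; lra.
    - intros E. symmetry in E. revert E. apply g_ne_Ob. lra. }
  destruct Hoff as [t1 [Ht1 L1]].
  destruct (g_param_in_period Om g dg Hg (reflect Ob u (g t1)) T0) as [r [Hr Gr]].
  { apply (boundary_reflect Om Ob u Hu Hsym), g_bd. }
  assert (Hr0 : r <> T0).
  { intros ->. apply (g_ne_Ob t1 Ht1).
    rewrite <- (reflect_involutive Ob u (g t1)) by exact Hu.
    rewrite <- Gr, HT0. apply reflect_Ob. }
  assert (Hneg : lateral Ob u (g t1) * lateral Ob u (g r) < 0).
  { rewrite Gr, lateral_reflect by exact Hu.
    assert (0 < lateral Ob u (g t1) * lateral Ob u (g t1)) by (apply Rsqr_pos_lt in L1; exact L1).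
    lra. }
  destruct (Rlt_dec t1 r) as [Hlt|Hge].
  - destruct (IVT_open _ t1 r lateral_g_continuous Hlt Hneg) as [z [Hz Fz]].
    exists z. split; [lra | exact Fz].
  - assert (r <> t1) by (intros ->; nra).
    rewrite Rmult_comm in Hneg.
    destruct (IVT_open _ r t1 lateral_g_continuous ltac:(lra) Hneg) as [z [Hz Fz]].
    exists z. split; [lra | exact Fz].
Qed.

Variable ts : R.
Hypotheses (Hts : T0 < ts < T0 + 1) (Hts_axis : lateral Ob u (g ts) = 0).

Lemma lateral_g_neq0 t : T0 < t < T0 + 1 -> t <> ts -> lateral Ob u (g t) <> 0.
Proof.
  intros Ht Htts Lt.
  apply (axis_boundary_three Om Ob u HOm Hu Ob (g t) (g ts)); auto using lateral_Ob.
  - intros E. symmetry in E. revert E. apply g_ne_Ob. exact Ht.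
  - intros E. apply g_inj_open in E; auto.
  - intros E. symmetry in E. revert E. apply g_ne_Ob. exact Hts.
Qed.

Lemma axial_g_ts_neq0 : axial Ob u (g ts) <> 0.
Proof.
  intros E. apply (g_ne_Ob ts Hts), (axial_lateral_inj Ob u); [exact Hu | |].
  - rewrite E, axial_Ob. reflexivity.
  - rewrite Hts_axis, lateral_Ob. reflexivity.
Qed.

Definition height (t : R) : R := axial Ob u (g t) / axial Ob u (g ts).

Lemma height_derive t : derivable_pt_lim height t (dot (dg t) u / axial Ob u (g ts)).
Proof.
  pose proof (axial_g_derive Om g dg Hg Ob u t).
  unfold height, Rdiv. eapply derivable_pt_lim_eq; [derive_poly | cbv beta; ring].
Qed.

Lemma height_continuous : continuity height.
Proof. exact (continuity_of_derivable_pt_lim height _ height_derive). Qed.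

Lemma height_T0 : height T0 = 0.
Proof. unfold height. rewrite HT0, axial_Ob. unfold Rdiv. ring. Qed.

Lemma height_period_end : height (T0 + 1) = 0.
Proof. unfold height. rewrite g_period_end, axial_Ob. unfold Rdiv. ring. Qed.

Lemma height_ts : height ts = 1.
Proof. unfold height. field. exact axial_g_ts_neq0. Qed.

Lemma height_bounds t : T0 < t < T0 + 1 -> t <> ts -> 0 < height t < 1.
Proof.
  intros Ht Htts. apply (axis_strip Om Ob u HOm Hu Hsym); auto.
  - apply g_ne_Ob. exact Hts.
  - apply lateral_g_neq0; auto.
Qed.

Lemma height_range t : 0 <= height t <= 1.
Proof.
  destruct (exists_shift_into_period t T0) as [z Hz].
  assert (Hh : height t = height (t - IZR z)).
  { unfold height. rewrite <- (g_periodic_Z Om g dg Hg z (t - IZR z)).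
    replace (t - IZR z + IZR z) with t by ring. reflexivity. }
  rewrite Hh.
  destruct (Req_dec (t - IZR z) T0) as [->|H0]; [rewrite height_T0; lra|].
  destruct (Req_dec (t - IZR z) ts) as [->|H1]; [rewrite height_ts; lra|].
  pose proof (height_bounds (t - IZR z) ltac:(lra) H1). lra.
Qed.

Lemma dg_perp_at_T0 : dot (dg T0) u = 0.
Proof.
  assert (Z := derivable_pt_lim_local_min height T0 _ 1 (height_derive T0) Rlt_0_1).
  rewrite height_T0 in Z.
  assert (Z' : dot (dg T0) u / axial Ob u (g ts) = 0)
    by (apply Z; intros x _; apply height_range).
  apply (Rmult_eq_reg_r (/ axial Ob u (g ts))); [|apply Rinv_neq_0_compat, axial_g_ts_neq0].
  rewrite Rmult_0_l. exact Z'.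
Qed.

Lemma dg_perp_at_ts : dot (dg ts) u = 0.
Proof.
  assert (Z := derivable_pt_lim_local_max height ts _ 1 (height_derive ts) Rlt_0_1).
  rewrite height_ts in Z.
  assert (Z' : dot (dg ts) u / axial Ob u (g ts) = 0)
    by (apply Z; intros x _; apply height_range).
  apply (Rmult_eq_reg_r (/ axial Ob u (g ts))); [|apply Rinv_neq_0_compat, axial_g_ts_neq0].
  rewrite Rmult_0_l. exact Z'.
Qed.

Lemma lateral_same_sign s t : T0 < s < T0 + 1 -> T0 < t < T0 + 1 ->
  0 < (s - ts) * (t - ts) -> 0 < lateral Ob u (g s) * lateral Ob u (g t).
Proof.
  intros Hs Ht Hst.
  assert (Ls : lateral Ob u (g s) <> 0) by (apply lateral_g_neq0; auto; intros ->; nra).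
  assert (Lt : lateral Ob u (g t) <> 0) by (apply lateral_g_neq0; auto; intros ->; nra).
  destruct (Rlt_dec 0 (lateral Ob u (g s) * lateral Ob u (g t))) as [Hpos|Hnpos];
    [exact Hpos | exfalso].
  assert (Hneg : lateral Ob u (g s) * lateral Ob u (g t) < 0).
  { assert (lateral Ob u (g s) * lateral Ob u (g t) <> 0)
      by (apply Rmult_integral_contrapositive; auto). lra. }
  destruct (Rtotal_order s t) as [Hlt|[->|Hgt]].
  - destruct (IVT_open _ s t lateral_g_continuous Hlt Hneg) as [z [Hz Fz]].
    revert Fz. apply lateral_g_neq0; [lra | intros ->; nra].
  - nra.
  - rewrite Rmult_comm in Hneg.
    destruct (IVT_open _ t s lateral_g_continuous Hgt Hneg) as [z [Hz Fz]].
    revert Fz. apply lateral_g_neq0; [lra | intros ->; nra].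
Qed.

Lemma same_half_injective s t : T0 < s < T0 + 1 -> T0 < t < T0 + 1 ->
  0 < (s - ts) * (t - ts) -> height s = height t -> s = t.
Proof.
  intros Hs Ht Hst Hh. apply g_inj_open; auto.
  apply (boundary_same_side Om Ob u HOm Hu Hsym); auto.
  - unfold height in Hh. apply (Rmult_eq_reg_r (/ axial Ob u (g ts))); [exact Hh|].
    apply Rinv_neq_0_compat, axial_g_ts_neq0.
  - apply lateral_same_sign; auto.
Qed.

Lemma height_increasing s t : T0 <= s < t -> t <= ts -> height s < height t.
Proof.
  apply (increasing_of_injective height T0 ts height_continuous).
  - intros x Hx. rewrite height_T0.
    destruct (Req_dec x ts) as [->|Hne]; [rewrite height_ts; lra|].
    apply height_bounds; lra.
  - intros x y Hx Hy Hxy.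
    destruct (Req_dec x ts) as [->|Hx']; destruct (Req_dec y ts) as [->|Hy']; auto.
    + rewrite height_ts in Hxy. pose proof (height_bounds y ltac:(lra) Hy'). lra.
    + rewrite height_ts in Hxy. pose proof (height_bounds x ltac:(lra) Hx'). lra.
    + apply same_half_injective; auto; [lra | lra | nra].
Qed.

Lemma height_decreasing s t : ts <= s < t -> t <= T0 + 1 -> height t < height s.
Proof.
  intros Hs Ht. cut (2 - height s < 2 - height t); [lra|]. revert s t Hs Ht.
  apply (increasing_of_injective (fun x => 2 - height x) ts (T0 + 1)).
  - intros x. apply continuity_pt_minus;
      [apply continuity_pt_const; intros ? ?; reflexivity | apply height_continuous].
  - intros x Hx. rewrite height_ts.
    destruct (Req_dec x (T0 + 1)) as [->|Hne]; [rewrite height_period_end; lra|].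
    pose proof (height_bounds x ltac:(lra) ltac:(lra)). lra.
  - intros x y Hx Hy Hxy.
    destruct (Req_dec x (T0 + 1)) as [->|Hx']; destruct (Req_dec y (T0 + 1)) as [->|Hy'];
      auto.
    + rewrite height_period_end in Hxy. pose proof (height_bounds y ltac:(lra) ltac:(lra)). lra.
    + rewrite height_period_end in Hxy. pose proof (height_bounds x ltac:(lra) ltac:(lra)). lra.
    + apply same_half_injective; [lra | lra | nra | lra].
Qed.

Definition arc_key (t : R) : R := if Rle_dec t ts then height t else 2 - height t.

Lemma arc_key_T0 : arc_key T0 = 0.
Proof. unfold arc_key. destruct Rle_dec; [apply height_T0 | lra]. Qed.

Lemma arc_key_period_end : arc_key (T0 + 1) = 2.
Proof. unfold arc_key. destruct Rle_dec; [lra|]. rewrite height_period_end. ring. Qed.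

Lemma arc_key_ts : arc_key ts = 1.
Proof. unfold arc_key. destruct Rle_dec; [apply height_ts | lra]. Qed.

Lemma arc_key_increasing s t : T0 <= s < t -> t <= T0 + 1 -> arc_key s < arc_key t.
Proof.
  intros Hs Ht. unfold arc_key.
  destruct (Rle_dec s ts), (Rle_dec t ts).
  - apply height_increasing; lra.
  - assert (height s <= 1).
    { destruct (Req_dec s ts) as [->|]; [rewrite height_ts; lra|].
      destruct (Req_dec s T0) as [->|]; [rewrite height_T0; lra|].
      pose proof (height_bounds s ltac:(lra) ltac:(auto)). lra. }
    assert (height t < 1) by (pose proof (height_decreasing ts t ltac:(lra) Ht);
                              rewrite height_ts in *; lra).
    lra.
  - lra.
  - pose proof (height_decreasing s t ltac:(lra) Ht). lra.
Qed.

Lemma arc_key_lt_inv s t : T0 <= s <= T0 + 1 -> T0 <= t <= T0 + 1 ->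
  arc_key s < arc_key t -> s < t.
Proof.
  intros Hs Ht Hk. destruct (Rtotal_order s t) as [|[->|Hgt]]; [assumption | lra |].
  pose proof (arc_key_increasing t s ltac:(lra) ltac:(lra)). lra.
Qed.

Lemma arc_key_reflect s r : T0 < s < T0 + 1 -> T0 < r < T0 + 1 ->
  g r = reflect Ob u (g s) -> arc_key r = 2 - arc_key s.
Proof.
  intros Hs Hr Grs.
  assert (Hh : height r = height s) by (unfold height; rewrite Grs, axial_reflect; auto).
  assert (Hl : lateral Ob u (g r) = - lateral Ob u (g s))
    by (rewrite Grs, lateral_reflect; auto).
  destruct (Req_dec s ts) as [->|Hs'].
  - destruct (Req_dec r ts) as [->|Hr']; [rewrite arc_key_ts; ring|].
    exfalso. apply (lateral_g_neq0 r Hr Hr'). rewrite Hl, Hts_axis. ring.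
  - assert (Hr' : r <> ts) by (intros ->; apply (lateral_g_neq0 s Hs Hs'); lra).
    assert (Hopp : (s - ts) * (r - ts) < 0).
    { destruct (Rlt_dec 0 ((s - ts) * (r - ts))) as [Hpos|Hnpos].
      - pose proof (lateral_same_sign s r Hs Hr Hpos) as Hsame. rewrite Hl in Hsame.
        nra.
      - assert ((s - ts) * (r - ts) <> 0)
          by (apply Rmult_integral_contrapositive; split; lra).
        lra. }
    unfold arc_key. destruct (Rle_dec r ts), (Rle_dec s ts); rewrite ?Hh; nra.
Qed.

Section Polygon.
Variables (q : nat) (p : nat -> pt) (t : nat -> R).
Hypotheses (Hq : (2 <= q)%nat) (Hgt : forall j, (j < q)%nat -> g (t j) = p j)
  (Hinc : forall j, (S j < q)%nat -> t j < t (S j)) (Hlast : t (pred q) < t 0%nat + 1)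
  (Hsymp : forall j, (j < q)%nat -> exists k, (k < q)%nat /\ reflect Ob u (p j) = p k)
  (Hp0 : p 0%nat = Ob) (Ht0 : t 0%nat = T0).

Notation tau := (closed_param q t).

Lemma tau_increasing i : (i < q)%nat -> tau i < tau (S i).
Proof. apply cyclic_order_iff; [lia | split; assumption]. Qed.

Lemma tau_lt i j : (i < j <= q)%nat -> tau i < tau j.
Proof. apply increasing_seq_lt. exact tau_increasing. Qed.

Lemma tau_0 : tau 0%nat = T0.
Proof. unfold closed_param. destruct Nat.eq_dec; [lia | exact Ht0]. Qed.

Lemma tau_q : tau q = T0 + 1.
Proof. unfold closed_param. destruct Nat.eq_dec; [rewrite Ht0; reflexivity | lia]. Qed.

Lemma tau_range i : (i <= q)%nat -> T0 <= tau i <= T0 + 1.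
Proof.
  intros Hi. rewrite <- tau_0.
  destruct (Nat.eq_dec i 0) as [->|H0]; [lra|].
  pose proof (tau_lt 0 i ltac:(lia)).
  destruct (Nat.eq_dec i q) as [->|Hiq]; [rewrite tau_q, tau_0; lra|].
  pose proof (tau_lt i q ltac:(lia)). rewrite tau_q, tau_0 in *. lra.
Qed.

Lemma tau_inner i : (1 <= i < q)%nat -> T0 < tau i < T0 + 1.
Proof.
  intros Hi. pose proof (tau_lt 0 i ltac:(lia)). pose proof (tau_lt i q ltac:(lia)).
  rewrite tau_0, tau_q in *. lra.
Qed.

Lemma tau_vertex i : (i < q)%nat -> tau i = t i.
Proof. intros Hi. unfold closed_param. destruct Nat.eq_dec; [lia | reflexivity]. Qed.

Lemma tau_period i : (i < q)%nat -> T0 <= tau i < T0 + 1.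
Proof.
  intros Hi. pose proof (tau_range i ltac:(lia)). pose proof (tau_lt i q ltac:(lia)).
  rewrite tau_q in *. lra.
Qed.

Lemma vertex_inj i j : (i < q)%nat -> (j < q)%nat -> p i = p j -> i = j.
Proof.
  intros Hi Hj E. rewrite <- (Hgt i Hi), <- (Hgt j Hj), <- (tau_vertex i Hi),
    <- (tau_vertex j Hj) in E.
  apply (g_inj_period Om g dg Hg T0) in E; [|apply tau_period; assumption ..].
  destruct (Nat.lt_total i j) as [Hlt|[|Hgt']]; [|assumption|].
  - pose proof (tau_lt i j ltac:(lia)). lra.
  - pose proof (tau_lt j i ltac:(lia)). lra.
Qed.

Lemma tau_lt_inv i j : (i <= q)%nat -> (j <= q)%nat -> tau i < tau j -> (i < j)%nat.
Proof.
  intros Hi Hj Hlt. destruct (Nat.lt_ge_cases i j) as [|Hji]; [assumption|].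
  destruct (Nat.eq_dec i j) as [->|]; [lra|].
  pose proof (tau_lt j i ltac:(lia)). lra.
Qed.

Lemma arc_key_tau_lt i j : (i < j <= q)%nat -> arc_key (tau i) < arc_key (tau j).
Proof.
  intros Hij. apply arc_key_increasing.
  - pose proof (tau_range i ltac:(lia)). pose proof (tau_lt i j Hij). lra.
  - apply tau_range. lia.
Qed.

Lemma arc_key_partner i k : (1 <= i < q)%nat -> (1 <= k < q)%nat ->
  reflect Ob u (p i) = p k -> arc_key (tau k) = 2 - arc_key (tau i).
Proof.
  intros Hi Hk E. apply arc_key_reflect; [apply tau_inner; lia .. |].
  rewrite !tau_vertex, !Hgt by lia. symmetry. exact E.
Qed.

Lemma partner_pos i k : (1 <= i < q)%nat -> (k < q)%nat ->
  reflect Ob u (p i) = p k -> (1 <= k)%nat.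
Proof.
  intros Hi Hk E. destruct (Nat.eq_dec k 0) as [->|]; [|lia]. exfalso.
  assert (E0 : p i = p 0%nat).
  { rewrite <- (reflect_involutive Ob u (p i)) by exact Hu. rewrite E, Hp0. apply reflect_Ob. }
  apply vertex_inj in E0; lia.
Qed.

(** The vertices [p 1], ..., [p (q - 1)] come in increasing [arc_key] order and the
    reflection turns [arc_key] into [2 - arc_key], so it reverses their order. *)
Lemma mirror_vertex i : (i < q)%nat -> reflect Ob u (p i) = p (mirror_idx q i).
Proof.
  intros Hi. unfold mirror_idx. destruct (Nat.eq_dec i 0) as [->|Hi0].
  - rewrite Hp0. apply reflect_Ob.
  - destruct (Hsymp i Hi) as [k [Hk Ek]].
    pose proof (partner_pos i k ltac:(lia) Hk Ek).
    set (M := fun i k => reflect Ob u (p i) = p k).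
    assert (Hex : forall i', (1 <= i' <= q - 1)%nat ->
              exists k', (1 <= k' <= q - 1)%nat /\ M i' k').
    { intros i' Hi'. destruct (Hsymp i' ltac:(lia)) as [k' [Hk' Ek']].
      pose proof (partner_pos i' k' ltac:(lia) Hk' Ek').
      exists k'. split; [lia | exact Ek']. }
    assert (Hrev : forall i1 j1 k1 l1, (1 <= i1 < j1)%nat -> (j1 <= q - 1)%nat ->
              (1 <= k1 <= q - 1)%nat -> (1 <= l1 <= q - 1)%nat ->
              M i1 k1 -> M j1 l1 -> (l1 < k1)%nat).
    { intros i1 j1 k1 l1 Hij Hj Hk1 Hl1 E1 E2.
      apply tau_lt_inv; [lia | lia |].
      apply arc_key_lt_inv; [apply tau_range; lia .. |].
      rewrite (arc_key_partner i1 k1), (arc_key_partner j1 l1) by (auto; lia).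
      pose proof (arc_key_tau_lt i1 j1 ltac:(lia)). lra. }
    pose proof (order_reversing_rel (q - 1) M Hex Hrev i k ltac:(lia) ltac:(lia) Ek).
    replace (q - i)%nat with k by lia. exact Ek.
Qed.

Lemma arc_key_mirror i : (i <= q)%nat -> arc_key (tau (q - i)) = 2 - arc_key (tau i).
Proof.
  intros Hi. destruct (Nat.eq_dec i 0) as [->|Hi0].
  { rewrite Nat.sub_0_r, tau_q, tau_0, arc_key_T0, arc_key_period_end. ring. }
  destruct (Nat.eq_dec i q) as [->|Hiq].
  { rewrite Nat.sub_diag, tau_q, tau_0, arc_key_T0, arc_key_period_end. ring. }
  apply arc_key_partner; [lia | lia |].
  rewrite mirror_vertex by lia. unfold mirror_idx. destruct Nat.eq_dec; [lia | reflexivity].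
Qed.

Lemma axis_vertex_perp i : (i < q)%nat -> mirror_idx q i = i -> dot (dg (t i)) u = 0.
Proof.
  intros Hi Hmi. destruct (Nat.eq_dec i 0) as [->|Hi0].
  - rewrite Ht0. apply dg_perp_at_T0.
  - replace (t i) with ts; [apply dg_perp_at_ts|].
    destruct (Req_dec ts (t i)) as [|Hne]; [assumption|exfalso].
    apply (lateral_g_neq0 (t i)); [rewrite <- tau_vertex by lia; apply tau_inner; lia | auto |].
    rewrite Hgt by exact Hi.
    pose proof (lateral_reflect Ob u (p i) Hu) as E.
    rewrite mirror_vertex, Hmi in E by exact Hi. lra.
Qed.

Lemma axis_vertex_tangent i : (i < q)%nat -> mirror_idx q i = i ->
  cross (psub (p (next_idx q i)) (p (prev_idx q i))) (dg (t i)) = 0.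
Proof.
  intros Hi Hmi. apply (perp_cross u); [exact Hu | | apply axis_vertex_perp; auto].
  replace (p (prev_idx q i)) with (reflect Ob u (p (next_idx q i)));
    [apply dot_sub_reflect; exact Hu|].
  rewrite mirror_vertex by (apply next_idx_lt; exact Hi).
  rewrite mirror_next_idx, Hmi by exact Hi. reflexivity.
Qed.

Lemma mirror_idx_pos j : (1 <= j < q)%nat -> mirror_idx q j = (q - j)%nat.
Proof. intros Hj. unfold mirror_idx. destruct Nat.eq_dec; lia. Qed.

Lemma below_axis_param j : (1 <= j < q)%nat -> (j < mirror_idx q j)%nat -> t j < ts.
Proof.
  intros Hj Hjk. rewrite mirror_idx_pos in Hjk by exact Hj.
  rewrite <- tau_vertex by lia. apply arc_key_lt_inv; [apply tau_range; lia | lra |].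
  pose proof (arc_key_mirror j ltac:(lia)). pose proof (arc_key_tau_lt j (q - j) ltac:(lia)).
  rewrite arc_key_ts. lra.
Qed.

Lemma above_axis_param j : (1 <= j < q)%nat -> (mirror_idx q j < j)%nat -> ts < t j.
Proof.
  intros Hj Hkj. rewrite mirror_idx_pos in Hkj by exact Hj.
  rewrite <- tau_vertex by lia. apply arc_key_lt_inv; [lra | apply tau_range; lia |].
  pose proof (arc_key_mirror j ltac:(lia)). pose proof (arc_key_tau_lt (q - j) j ltac:(lia)).
  rewrite arc_key_ts. lra.
Qed.

Lemma reflected_param j s : (1 <= j < q)%nat -> tau (j - 1) < s < tau (S j) ->
  exists r, g r = reflect Ob u (g s) /\ arc_key r = 2 - arc_key s /\
    tau (q - S j) < r < tau (S (q - j)).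
Proof.
  intros Hj Hs.
  pose proof (tau_range (j - 1) ltac:(lia)). pose proof (tau_range (S j) ltac:(lia)).
  assert (Hs' : T0 < s < T0 + 1) by lra.
  destruct (g_param_in_period Om g dg Hg (reflect Ob u (g s)) T0) as [r [Hr Grs]].
  { apply (boundary_reflect Om Ob u Hu Hsym), g_bd. }
  assert (Hr0 : r <> T0).
  { intros ->. apply (g_ne_Ob s Hs').
    rewrite <- (reflect_involutive Ob u (g s)) by exact Hu.
    rewrite <- Grs, HT0. apply reflect_Ob. }
  assert (Hkey : arc_key r = 2 - arc_key s) by (apply arc_key_reflect; auto; lra).
  exists r. split; [exact Grs | split; [exact Hkey|]].
  pose proof (arc_key_mirror (S j) ltac:(lia)). pose proof (arc_key_mirror (j - 1) ltac:(lia)).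
  replace (q - (j - 1))%nat with (S (q - j)) in * by lia.
  pose proof (arc_key_increasing (tau (j - 1)) s ltac:(lra) ltac:(lra)).
  pose proof (arc_key_increasing s (tau (S j)) ltac:(lra) ltac:(lra)).
  split; apply arc_key_lt_inv; try (apply tau_range; lia); try lra.
Qed.

Lemma perturbed_in_Pq j s r : (1 <= j < q)%nat -> mirror_idx q j <> j ->
  g r = reflect Ob u (g s) ->
  (forall i, (i < q)%nat ->
     upd (upd tau j s) (mirror_idx q j) r i < upd (upd tau j s) (mirror_idx q j) r (S i)) ->
  in_Pq Om g Ob u q (upd (upd p j (g s)) (mirror_idx q j) (g r)).
Proof.
  intros Hj Hk Grs Hord. set (k := mirror_idx q j) in *.
  assert (Hkv : k = (q - j)%nat) by (apply mirror_idx_pos; exact Hj).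
  assert (Hmk : mirror_idx q k = j) by (apply mirror_idx_involutive; lia).
  split; [|split].
  - exists (upd (upd t j s) k r). split; [|apply cyclic_order_iff; [lia|]].
    + intros i Hi. unfold upd. destruct (Nat.eq_dec i k), (Nat.eq_dec i j); auto.
    + intros i Hi. rewrite !closed_param_upd by lia. apply Hord. exact Hi.
  - intros i Hi. exists (mirror_idx q i). split; [apply mirror_idx_lt; exact Hi|]. unfold upd.
    destruct (Nat.eq_dec i k) as [->|Hik]; [|destruct (Nat.eq_dec i j) as [->|Hij]].
    + rewrite Hmk. destruct (Nat.eq_dec j k); [lia|]. destruct (Nat.eq_dec j j); [|lia].
      rewrite Grs. apply reflect_involutive. exact Hu.
    + fold k. destruct (Nat.eq_dec k k); [|lia]. symmetry. exact Grs.
    + destruct (Nat.eq_dec (mirror_idx q i) k) as [E|].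
      { exfalso. apply Hij. rewrite <- (mirror_idx_involutive q i Hi), E. exact Hmk. }
      destruct (Nat.eq_dec (mirror_idx q i) j) as [E|].
      { exfalso. apply Hik. rewrite <- (mirror_idx_involutive q i Hi), E. reflexivity. }
      apply mirror_vertex. exact Hi.
  - unfold upd. destruct (Nat.eq_dec 0 k); [lia|]. destruct (Nat.eq_dec 0 j); [lia|].
    exact Hp0.
Qed.

Hypothesis Hmax : forall p', in_Pq Om g Ob u q p' -> area q p' <= area q p.

Lemma perturbation_area_le j s : (1 <= j < q)%nat -> mirror_idx q j <> j ->
  tau (j - 1) < s < tau (S j) -> 0 < (s - ts) * (t j - ts) ->
  area q (upd (upd p j (g s)) (mirror_idx q j) (reflect Ob u (g s))) <= area q p.
Proof.
  intros Hj Hk Hs Hside.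
  destruct (reflected_param j s Hj Hs) as [r [Grs [Hkey Hr]]].
  rewrite <- Grs. apply Hmax, (perturbed_in_Pq j s r Hj Hk Grs).
  pose proof (mirror_idx_pos j Hj) as Hkv. set (k := mirror_idx q j) in *.
  pose proof (tau_range (pred j) ltac:(lia)). pose proof (tau_range (S j) ltac:(lia)).
  replace (q - S j)%nat with (pred k) in Hr by lia.
  replace (S (q - j)) with (S k) in Hr by lia.
  replace (j - 1)%nat with (pred j) in Hs by lia.
  pose proof (tau_range (pred k) ltac:(lia)). pose proof (tau_range (S k) ltac:(lia)).
  destruct (Nat.lt_ge_cases j k) as [Hjk|Hkj].
  - assert (s < ts) by (pose proof (below_axis_param j Hj Hjk); nra).
    assert (arc_key s < 1) by (rewrite <- arc_key_ts; apply arc_key_increasing; lra).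
    assert (s < r) by (apply arc_key_lt_inv; lra).
    apply (upd2_increasing tau q j k s r tau_increasing); lia || lra.
  - assert (Hkj' : (k < j)%nat) by lia.
    assert (ts < s) by (pose proof (above_axis_param j Hj Hkj'); nra).
    assert (1 < arc_key s) by (rewrite <- arc_key_ts; apply arc_key_increasing; lra).
    assert (r < s) by (apply arc_key_lt_inv; lra).
    intros i Hi. rewrite !(upd_comm _ j k) by lia.
    apply (upd2_increasing tau q k j r s tau_increasing); lia || lra.
Qed.

Lemma off_axis_tangent j : (j < q)%nat -> mirror_idx q j <> j ->
  cross (psub (p (next_idx q j)) (p (prev_idx q j))) (dg (t j)) = 0.
Proof.
  intros Hj Hk. set (k := mirror_idx q j) in *.
  assert (Hj1 : (1 <= j)%nat)
    by (destruct (Nat.eq_dec j 0) as [->|];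
        [unfold k, mirror_idx in Hk; destruct Nat.eq_dec; lia | lia]).
  assert (Htj : t j <> ts).
  { destruct (Nat.lt_total j k) as [Hjk|[Hjk|Hjk]].
    - pose proof (below_axis_param j ltac:(lia) Hjk). lra.
    - symmetry in Hjk. contradiction.
    - pose proof (above_axis_param j ltac:(lia) Hjk). lra. }
  assert (Hgap1 : tau (j - 1) < t j) by (rewrite <- (tau_vertex j Hj); apply tau_lt; lia).
  assert (Hgap2 : t j < tau (S j)) by (rewrite <- (tau_vertex j Hj); apply tau_lt; lia).
  set (d := Rmin (Rmin (t j - tau (j - 1)) (tau (S j) - t j)) (Rabs (t j - ts))).
  assert (Hd1 : d <= t j - tau (j - 1)) by (unfold d; eapply Rle_trans; apply Rmin_l).
  assert (Hd2 : d <= tau (S j) - t j)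
    by (unfold d; eapply Rle_trans; [apply Rmin_l | apply Rmin_r]).
  assert (Hd3 : d <= Rabs (t j - ts)) by (unfold d; apply Rmin_r).
  assert (Hd : 0 < d).
  { unfold d. apply Rmin_pos; [apply Rmin_pos; lra | apply Rabs_pos_lt; lra]. }
  assert (Hk' : k <> j) by exact Hk.
  assert (D := area_mirror_pair_derive g dg Ob u q p j k (t j) Hu Hq Hj
                 (mirror_idx_lt q j Hj) (not_eq_sym Hk') (g_vderive Om g dg Hg (t j))
                 (Hgt j Hj) (mirror_vertex j Hj)).
  specialize (D ltac:(rewrite mirror_vertex, mirror_prev_idx by (auto using prev_idx_lt);
                      reflexivity)
                ltac:(rewrite mirror_vertex, mirror_next_idx by (auto using next_idx_lt);
                      reflexivity)).
  assert (G0 : area q (upd (upd p j (g (t j))) k (reflect Ob u (g (t j)))) = area q p).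
  { apply area_ext. intros i. rewrite (Hgt j Hj), (mirror_vertex j Hj). unfold upd.
    destruct (Nat.eq_dec i k) as [->|]; [reflexivity|].
    destruct (Nat.eq_dec i j) as [->|]; reflexivity. }
  apply derivable_pt_lim_local_max with (d := d) in D; [|exact Hd|].
  - transitivity (- cross (dg (t j)) (psub (p (next_idx q j)) (p (prev_idx q j))));
      [unfold cross; ring|].
    rewrite D. ring.
  - intros x Hx. rewrite G0. apply perturbation_area_le; [lia | exact Hk | lra |].
    apply close_same_side. apply Rabs_def1; lra.
Qed.

Lemma polygon_is_orbit : periodic_orbit g dg q p.
Proof.
  intros j Hj. fold (prev_idx q j) (next_idx q j).
  pose proof (prev_idx_lt q j Hj). pose proof (next_idx_lt q j Hj).
  exists (t (prev_idx q j)), (t j), (t (next_idx q j)).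
  split; [auto|]. split; [auto|]. split; [auto|]. split.
  - destruct (Nat.eq_dec (mirror_idx q j) j).
    + apply axis_vertex_tangent; assumption.
    + apply off_axis_tangent; assumption.
  - intros E. apply vertex_inj in E; auto.
    assert (q = 2%nat) by (destruct (prev_eq_next_idx q j Hj (eq_sym E)); lia).
    apply (perp_cross u); [exact Hu | |];
      apply axis_vertex_perp; auto; unfold mirror_idx; destruct Nat.eq_dec; lia.
Qed.

End Polygon.
End AxisStructure.

Theorem proposition3p3
  (Om : pt -> Prop) (g dg : R -> pt) (Ob u : pt) (q : nat)
  (HOm : strictly_convex_domain Om)
  (Hg : ccw_C1_boundary_param Om g dg)
  (Hu : u <> (0, 0))
  (Hsym : axially_symmetric Om Ob u)
  (HO : in_boundary Om Ob)
  (q_ge2 : (2 <= q)%nat)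
  (p : nat -> pt)
  (Hp : in_Pq Om g Ob u q p)
  (Hmax : forall p', in_Pq Om g Ob u q p' -> area q p' <= area q p) :
  periodic_orbit g dg q p.
Proof.
  destruct Hp as [[t [Hgt [Hinc Hlast]]] [Hsymp Hp0]].
  assert (HT0 : g (t 0%nat) = Ob) by (rewrite Hgt by lia; exact Hp0).
  destruct (exists_axis_param Om g dg Ob u (t 0%nat) HOm Hg Hu Hsym HO HT0)
    as [ts [Hts Hts_axis]].
  exact (polygon_is_orbit Om g dg Ob u (t 0%nat) HOm Hg Hu Hsym HO HT0 ts Hts Hts_axis
           q p t q_ge2 Hgt Hinc Hlast Hsymp Hp0 eq_refl Hmax).
Qed.
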